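(* Let $G$ be a connected graph of order $n\geq 2$ and let $H$ be a graph with $k\geq 1$ connected components $H_1,\dots,H_k$. Let $c$ be a locating coloring of $G\odot H$. Then for every $u\in V(G)$ and every $t\in\{1,\dots,k\}$, the vertices of $H_t(u)$ receive at least $\chi_L(H_t+K_1)-1$ distinct colors under $c$, i.e. $H_t(u)$ meets at least $\chi_L(H_t+K_1)-1$ color classes of $c$.
   Context: All graphs are finite and simple. A $k$-coloring of a connected graph $G$ is a map $c:V(G)\to\{1,\dots,k\}$ with $c(u)\neq c(v)$ for adjacent $u,v$; it induces the partition $\Pi=\{C_1,\dots,C_k\}$ into color classes $C_i=c^{-1}(i)$. The color code of $v$ is $c_\Pi(v)=(d(v,C_1),\dots,d(v,C_k))$ with $d(v,C_i)=\min\{d(v,x): x\in C_i\}$ (graph distance). $c$ is a locating coloring if distinct vertices have distinct color codes; the locating-chromatic number $\chi_L(G)$ is the least $k$ for which a locating $k$-coloring exists. The corona product $G\odot H$ of a graph $G$ with vertex set $\{a_1,\dots,a_n\}$ and a graph $H$ is obtained from one copy of $G$ and $n$ disjoint copies of $H$ by joining $a_i$ to every vertex of the $i$-th copy of $H$. Write $(u)$ for the vertex of $G\odot H$ corresponding to $u\in V(G)$ and $(u,v)$, $v\in V(H)$, for the vertices of the copy of $H$ attached to $(u)$; $H(u)=\{(u,v):v\in V(H)\}$ and $H_t(u)=\{(u,v): v\in V(H_t)\}$. For a graph $F$, $F+K_1$ denotes the join of $F$ with a single new vertex adjacent to all vertices of $F$. *)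

From mathcomp Require Import all_boot.
Set Implicit Arguments. Unset Strict Implicit. Unset Printing Implicit Defensive.

Definition simple_graph (T : finType) (e : rel T) : Prop :=
  symmetric e /\ irreflexive e.

Definition connected_graph (T : finType) (e : rel T) : Prop :=
  forall x y : T, connect e x y.

Fixpoint ball (T : finType) (e : rel T) (u : T) (n : nat) : {set T} :=
  match n with
  | 0 => [set u]
  | n'.+1 => ball e u n' :|: [set y | [exists x in ball e u n', e x y]]
  end.

(* d(u, C) = min { d(u,x) : x in C }; equals #|T| (a sentinel exceeding every
   finite distance) when no vertex of C is reachable from u. *)
Definition setdist (T : finType) (e : rel T) (u : T) (C : {set T}) : nat :=
  find (fun n => [exists y in C, y \in ball e u n]) (iota 0 #|T|).

Definition color_class (T : finType) (k : nat) (c : T -> 'I_k) (i : 'I_k) : {set T} :=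
  [set x | c x == i].

Definition color_code (T : finType) (e : rel T) (k : nat) (c : T -> 'I_k) (v : T)
  : {ffun 'I_k -> nat} := [ffun i => setdist e v (color_class c i)].

Definition locating_coloring (T : finType) (e : rel T) (k : nat) (c : T -> 'I_k) : bool :=
  [&& [forall u, forall v, e u v ==> (c u != c v)],
      [forall i : 'I_k, exists v, c v == i] &
      [forall u, forall v, (color_code e c u == color_code e c v) ==> (u == v)]].

(* chi_L(G) = least k admitting a locating k-coloring (one always exists with
   k = #|T| colors, so the search range suffices). *)
Definition chiL (T : finType) (e : rel T) : nat :=
  find (fun k => [exists c : {ffun T -> 'I_k}, locating_coloring e c]) (iota 0 #|T|.+1).

(* Corona product G ⊙ H: vertices inl u = (u), inr (u, v) = (u, v). *)
Definition corona_rel (TG TH : finType) (eG : rel TG) (eH : rel TH)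
  : rel (TG + (TG * TH)) :=
  fun x y =>
    match x, y with
    | inl a, inl b => eG a b
    | inr (a, v), inr (b, w) => (a == b) && eH v w
    | inl a, inr (b, _) => a == b
    | inr (a, _), inl b => a == b
    end.

(* F + K_1 for the subgraph of H induced by a vertex set S: new vertex None. *)
Definition join_K1_rel (TH : finType) (eH : rel TH) (S : {set TH})
  : rel (option {x : TH | x \in S}) :=
  fun x y =>
    match x, y with
    | Some a, Some b => eH (val a) (val b)
    | None, Some _ => true
    | Some _, None => true
    | None, None => false
    end.

Definition component (TH : finType) (eH : rel TH) (S : {set TH}) : Prop :=
  exists x : TH, S = [set y | connect eH x y].
Arguments join_K1_rel {TH} eH S _ _.

From mathcomp Require Import all_boot.
From Stdlib Require Import FunctionalExtensionality.
Set Implicit Arguments. Unset Strict Implicit. Unset Printing Implicit Defensive.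

(* The vertex (u) together with H_t(u) spans a copy of H_t + K_1 in G ⊙ H, and c
   restricts to a proper coloring of it. Any walk of length two from (u,x) ends in the
   closed neighbourhood of (u), so every distance from (u,x) beyond 1 is one more than a
   distance from (u); hence the color code of (u,x) in G ⊙ H is determined by the colors
   on its closed neighbourhood, which are the same in H_t + K_1. Equal codes in
   H_t + K_1 therefore force equal codes in G ⊙ H, so the restriction is locating.
   Renumbering the colors it uses, chi_L(H_t + K_1) is at most the number of colors
   on H_t(u) plus one, for (u). *)

Lemma find_iota_leq (P : pred nat) n m : m < n -> P m -> find P (iota 0 n) <= m.
Proof.
move=> lt_mn Pm; rewrite leqNgt; apply/negP => /(before_find 0).
by rewrite nth_iota // add0n Pm.
Qed.

Lemma eq_find_iota2 (P Q : pred nat) n :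
  find P (iota 0 n.+2) = find Q (iota 0 n.+2) -> P 0 = Q 0 /\ (P 0 || P 1) = (Q 0 || Q 1).
Proof. by rewrite /=; case: (P 0); case: (Q 0); case: (P 1); case: (Q 1). Qed.

Section Balls.
Variables (T : finType) (e : rel T).

Lemma in_ball0 v y : (y \in ball e v 0) = (y == v).
Proof. by rewrite inE. Qed.

Lemma in_ballS v n y :
  (y \in ball e v n.+1) = (y \in ball e v n) || [exists x in ball e v n, e x y].
Proof. by rewrite /= !inE. Qed.

Lemma in_ball1 v y : (y \in ball e v 1) = (y == v) || e v y.
Proof.
rewrite in_ballS in_ball0; congr orb; apply/existsP/idP => [[x /andP[]]|evy].
  by rewrite in_ball0 => /eqP->.
by exists v; rewrite in_ball0 eqxx.
Qed.

Lemma sub_ball v m n : m <= n -> ball e v m \subset ball e v n.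
Proof.
elim: n => [|n IH]; first by rewrite leqn0 => /eqP->.
rewrite leq_eqVlt ltnS => /orP[/eqP-> //|/IH/subset_trans]; apply; exact: subsetUl.
Qed.

Lemma in_ball_succ_hub v p : e v p ->
    (forall w z, e v w -> e w z -> z \in ball e p 1) ->
  forall n z, (z \in ball e v n.+1) = (z \in ball e v 1) || (z \in ball e p n).
Proof.
move=> evp hub; elim=> [|n IH] z.
  by rewrite in_ball0; case: eqP => [->|_]; rewrite ?orbF // in_ball1 evp orbT.
have ball1_sub : ball e p 1 \subset ball e p n.+1 by apply: sub_ball.
apply/idP/idP.
  rewrite in_ballS => /orP[|/existsP[x /andP[]]].
    by rewrite IH => /orP[->//|/(subsetP (sub_ball p (leqnSn n)))->]; rewrite orbT.
  rewrite IH => /orP[|xp exz].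
    rewrite in_ball1 => /orP[/eqP-> evz|evx exz]; first by rewrite in_ball1 evz orbT.
    by rewrite (subsetP ball1_sub _ (hub _ _ evx exz)) orbT.
  rewrite (in_ballS p); apply/orP; right; apply/orP; right.
  by apply/existsP; exists x; rewrite xp.
case/orP => [/(subsetP (sub_ball v (isT : 1 <= n.+2)))//|].
rewrite in_ballS => /orP[zp|/existsP[x /andP[xp exz]]]; first by rewrite in_ballS IH zp !orbT.
by rewrite in_ballS; apply/orP; right; apply/existsP; exists x; rewrite IH xp orbT.
Qed.

Lemma exists_in_ball0 v (C : {set T}) : [exists y in C, y \in ball e v 0] = (v \in C).
Proof.
apply/existsP/idP => [[y /andP[yC]]|vC]; first by rewrite in_ball0 => /eqP<-.
by exists v; rewrite vC in_ball0 eqxx.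
Qed.

Lemma exists_in_ball1 v (C : {set T}) :
  [exists y in C, y \in ball e v 1] = (v \in C) || [exists y in C, e v y].
Proof.
apply/existsP/orP => [[y /andP[yC]]|[vC|/existsP[y /andP[yC evy]]]].
- by rewrite in_ball1 => /orP[/eqP<-|evy]; [left|right; apply/existsP; exists y; rewrite yC].
- by exists v; rewrite vC in_ball1 eqxx.
- by exists y; rewrite yC in_ball1 evy orbT.
Qed.

(* The search in [setdist] ranges over [iota 0 #|T|]; with at least two vertices
   it still separates distance 0 from distance 1. *)
Lemma setdist_eq_near v w (C : {set T}) : 1 < #|T| -> setdist e v C = setdist e w C ->
  (v \in C) = (w \in C) /\
  [exists y in C, y \in ball e v 1] = [exists y in C, y \in ball e w 1].
Proof.
rewrite /setdist; case: #|T| => [|[|n]] // _ /eq_find_iota2[].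
by rewrite !exists_in_ball0 !exists_in_ball1 !orbA !orbb.
Qed.

Lemma setdist0 v : setdist e v set0 = #|T|.
Proof.
rewrite /setdist hasNfind ?size_iota //.
by apply/hasPn => n _; apply/existsP => -[y]; rewrite inE.
Qed.
End Balls.

Lemma color_code_eq_near (T : finType) (e : rel T) k (f : T -> 'I_k) v w :
    1 < #|T| -> color_code e f v = color_code e f w ->
  f v = f w /\ forall i, [exists y in color_class f i, y \in ball e v 1] =
                        [exists y in color_class f i, y \in ball e w 1].
Proof.
move=> T_gt1 eq_code.
have near i : setdist e v (color_class f i) = setdist e w (color_class f i).
  by have := congr1 (fun g : {ffun _} => g i) eq_code; rewrite !ffunE.
split=> [|i]; last by case: (setdist_eq_near T_gt1 (near i)).
by case: (setdist_eq_near T_gt1 (near (f v))); rewrite !inE eqxx => /esym/eqP.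
Qed.

Section Colorings.
Variables (T : finType) (e : rel T) (k : nat).

Definition proper_coloring (f : T -> 'I_k) := forall x y, e x y -> f x != f y.

Lemma locating_coloringP (f : T -> 'I_k) :
  reflect [/\ proper_coloring f, forall i, exists v, f v = i & injective (color_code e f)]
          (locating_coloring e f).
Proof.
apply: (iffP and3P) => [[/forallP pr /forallP onto /forallP inj]|[pr onto inj]]; split.
- by move=> x y; move/forallP: (pr x) => /(_ y)/implyP.
- by move=> i; have /existsP[v /eqP] := onto i; exists v.
- move=> x y eq_code; apply/eqP; move/forallP: (inj x) => /(_ y)/implyP.
  by apply; rewrite eq_code.
- by apply/forallP => x; apply/forallP => y; apply/implyP; apply: pr.
- by apply/forallP => i; have [v fv] := onto i; apply/existsP; exists v; rewrite fv.
- by apply/forallP => x; apply/forallP => y; apply/implyP => /eqP/inj->.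
Qed.

Lemma chiL_le (f : T -> 'I_k) : locating_coloring e f -> chiL e <= k.
Proof.
move=> /[dup] loc /locating_coloringP[_ onto _].
have k_le : k <= #|T|.
  have colorsT : f @: [set: T] = [set: 'I_k].
    by apply/setP => i; rewrite !inE; have [v <-] := onto i; rewrite imset_f ?inE.
  by have := leq_imset_card f [set: T]; rewrite colorsT !cardsT card_ord.
apply: find_iota_leq; first by rewrite ltnS.
apply/existsP; exists [ffun v => f v].
by rewrite (_ : fun_of_fin _ = f) //; apply: functional_extensionality => v; rewrite ffunE.
Qed.
End Colorings.

Section ColorRank.
Variables (T : finType) (e : rel T) (k : nat) (f : T -> 'I_k) (x0 : T).

Let colors := f @: [set: T].
Let fx0_color : f x0 \in colors := imset_f f (in_setT x0).

Definition color_rank (v : T) : 'I_#|colors| := enum_rank_in fx0_color (f v).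

Lemma enum_val_color_rank v : enum_val (color_rank v) = f v.
Proof. by rewrite enum_rankK_in // imset_f. Qed.

Lemma color_class_rank j : color_class color_rank j = color_class f (enum_val j).
Proof.
apply/setP => v; rewrite !inE; apply/eqP/eqP => [<-|fv]; first by rewrite enum_val_color_rank.
by rewrite /color_rank fv enum_valK_in.
Qed.

Lemma color_class_notin i : i \notin colors -> color_class f i = set0.
Proof.
by move=> iN; apply/setP => v; rewrite !inE; apply: contraNF iN => /eqP<-; apply: imset_f.
Qed.

Lemma locating_color_rank :
  proper_coloring e f -> injective (color_code e f) -> locating_coloring e color_rank.
Proof.
move=> pr inj; apply/locating_coloringP; split.
- move=> x y /pr; apply: contra => /eqP/(congr1 enum_val).
  by rewrite !enum_val_color_rank => ->.
- move=> j; have /imsetP[v _ fv] := enum_valP j.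
  by exists v; rewrite /color_rank -fv enum_valK_in.
- move=> x y eq_code; apply: inj; apply/ffunP => i; rewrite !ffunE.
  have [iC|iN] := boolP (i \in colors); last by rewrite !color_class_notin // !setdist0.
  have := congr1 (fun g : {ffun _} => g (enum_rank_in fx0_color i)) eq_code.
  by rewrite !ffunE !color_class_rank enum_rankK_in.
Qed.
End ColorRank.

Lemma chiL_le_card_colors (T : finType) (e : rel T) k (f : T -> 'I_k) (x0 : T) :
  proper_coloring e f -> injective (color_code e f) -> chiL e <= #|f @: [set: T]|.
Proof. by move=> pr inj; apply: chiL_le (locating_color_rank x0 pr inj). Qed.

Section CoronaFiber.
Variables (TG TH : finType) (eG : rel TG) (eH : rel TH).
Local Notation E := (corona_rel eG eH).

Lemma in_corona_ball_leaf u x n z :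
  (z \in ball E (inr (u, x)) n.+1) = (z \in ball E (inr (u, x)) 1) || (z \in ball E (inl u) n).
Proof.
apply: in_ball_succ_hub => [|w {}z]; first by rewrite /= eqxx.
rewrite in_ball1; case: w => [a|[a y]]; case: z => [b|[b y']] //=.
- by move=> /eqP<- ->; rewrite orbT.
- by move=> /eqP<- /eqP<-; rewrite eqxx.
- by move=> /andP[/eqP<- _] /eqP<-; rewrite eqxx.
- by move=> /andP[/eqP<- _] /andP[/eqP<- _]; rewrite eqxx.
Qed.

Lemma corona_color_code_leaf k (c : TG + TG * TH -> 'I_k) u x y :
    c (inr (u, x)) = c (inr (u, y)) ->
    (forall i, [exists z in color_class c i, z \in ball E (inr (u, x)) 1] =
               [exists z in color_class c i, z \in ball E (inr (u, y)) 1]) ->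
  color_code E c (inr (u, x)) = color_code E c (inr (u, y)).
Proof.
move=> eq_c eq_nbhd; apply/ffunP => i; rewrite !ffunE /setdist.
apply: eq_find => -[|n]; cbv beta; first by rewrite !exists_in_ball0 !inE eq_c.
have exists_split v : [exists z in color_class c i, z \in ball E (inr (u, v)) n.+1] =
    [exists z in color_class c i, z \in ball E (inr (u, v)) 1] ||
    [exists z in color_class c i, z \in ball E (inl u) n].
  apply/existsP/orP => [[z /andP[zi]]|[|] /existsP[z /andP[zi zb]]].
  - rewrite in_corona_ball_leaf => /orP[zb|zb]; [left|right];
      by apply/existsP; exists z; rewrite zi zb.
  - by exists z; rewrite zi in_corona_ball_leaf zb.
  - by exists z; rewrite zi in_corona_ball_leaf zb orbT.
by rewrite !exists_split eq_nbhd.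
Qed.

Variables (u : TG) (S : {set TH}).
Local Notation J := (join_K1_rel eH S).

Definition join_K1_to_corona (w : option {x | x \in S}) : TG + TG * TH :=
  if w is Some a then inr (u, val a) else inl u.
Local Notation emb := join_K1_to_corona.

Lemma join_K1_to_corona_edge v w : J v w -> E (emb v) (emb w).
Proof. by case: v w => [a|] [b|] //= ab; rewrite eqxx. Qed.

Lemma proper_join_K1_restriction k (c : TG + TG * TH -> 'I_k) :
  proper_coloring E c -> proper_coloring J (c \o emb).
Proof. by move=> pr v w /join_K1_to_corona_edge/pr. Qed.

Hypothesis S_closed : forall a b, a \in S -> eH a b -> b \in S.

Lemma exists_in_ball1_leaf k (c : TG + TG * TH -> 'I_k) (a : {x | x \in S}) i :
  [exists z in color_class c i, z \in ball E (inr (u, val a)) 1] =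
  [exists w in color_class (c \o emb) i, w \in ball J (Some a) 1].
Proof.
rewrite !exists_in_ball1 !inE /=; congr orb.
apply/existsP/existsP => [[[b|[b y]] /andP[]]|[[b|] /andP[]]]; rewrite !inE /=.
- by move=> ci /eqP ub; exists None; rewrite inE /= ub ci.
- move=> ci /andP[/eqP ub ay]; exists (Some (exist _ y (S_closed (valP a) ay))).
  by rewrite inE /= ub ci.
- by move=> ci ab; exists (inr (u, val b)); rewrite inE ci /= eqxx.
- by move=> ci _; exists (inl u); rewrite inE ci /= eqxx.
Qed.

Lemma code_injective_join_K1_restriction k (c : TG + TG * TH -> 'I_k) :
    proper_coloring E c -> injective (color_code E c) -> 0 < #|S| ->
  injective (color_code J (c \o emb)).
Proof.
move=> pr inj S_gt0.
have J_gt1 : 1 < #|{: option {x | x \in S}}| by rewrite card_option card_sig ltnS.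
have prJ := proper_join_K1_restriction pr.
move=> v w /(color_code_eq_near J_gt1)[]; case: v w => [a|] [b|] //= eq_c eq_nbhd.
- congr Some; apply: val_inj.
  suff [] : inr (u, val a) = inr (u, val b) :> TG + TG * TH by [].
  apply: inj; apply: corona_color_code_leaf eq_c _ => i.
  by rewrite !exists_in_ball1_leaf.
- by have := prJ (Some a) None isT; rewrite /= eq_c eqxx.
- by have := prJ None (Some b) isT; rewrite /= eq_c eqxx.
Qed.
End CoronaFiber.

Theorem lemma2 (TG TH : finType) (eG : rel TG) (eH : rel TH) (k : nat)
  (c : TG + (TG * TH) -> 'I_k) :
  simple_graph eG -> connected_graph eG -> 2 <= #|TG| ->
  simple_graph eH -> 1 <= #|TH| ->
  locating_coloring (corona_rel eG eH) c ->
  forall (u : TG) (S : {set TH}), component eH S ->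
  chiL (join_K1_rel eH S) - 1 <= #|(fun x : TH => c (inr (u, x))) @: S|.
Proof.
move=> _ _ _ _ _ /locating_coloringP[pr _ inj] u S [x0 defS].
have S_closed a b : a \in S -> eH a b -> b \in S.
  by rewrite defS !inE => x0a /connect1/(connect_trans x0a).
have S_gt0 : 0 < #|S| by apply/card_gt0P; exists x0; rewrite defS inE connect0.
have colors_sub : (c \o join_K1_to_corona u (S := S)) @: [set: _] \subset
                  c (inl u) |: ((fun x : TH => c (inr (u, x))) @: S).
  apply/subsetP => _ /imsetP[[a|] _ ->]; rewrite !inE ?eqxx //=.
  by rewrite imset_f ?orbT // (valP a).
rewrite leq_subLR.
apply: leq_trans (chiL_le_card_colors None (proper_join_K1_restriction u (S := S) pr)
                   (code_injective_join_K1_restriction S_closed pr inj S_gt0)) _.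
by apply: leq_trans (subset_leq_card colors_sub) _; rewrite cardsU1 leq_add2r leq_b1.
Qed.
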